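(* Let $(E,\tau)$ be a locally solid vector lattice, where $\tau$ is a uo-Lebesgue topology. Suppose that $C_\tau=E$ or, equivalently, that $E$ has the countable sup property (this holds in particular when $C_\tau$ has a countable order basis, or when $\tau$ is metrisable). Then: (1) every $\tau$-convergent net in $E$ has an embedded sequence that is uo-convergent as well as $\tau$-convergent to the same limit; (2) a sequence in $E$ is $\tau$-convergent to $x\in E$ if and only if every subsequence has a further subsequence that is uo-convergent to $x$.
   Context: All vector lattices are real and Archimedean; linear topologies are Hausdorff. A locally solid topology on a vector lattice is a linear topology such that zero has a neighbourhood basis of solid sets. A net $(x_\alpha)$ order converges to $x$ if there is a net $y_\beta\downarrow0$ such that for each $\beta_0$ eventually $|x_\alpha-x|\leq y_{\beta_0}$; it uo-converges to $x$ if $|x_\alpha-x|\wedge|y|$ order converges to $0$ for every $y\in E$. A uo-Lebesgue topology is a locally solid topology in which every uo-convergent net converges topologically to the same limit. A sequence $(V_n)$ of neighbourhoods of zero is normal if $V_{n+1}+V_{n+1}\subseteq V_n$; the carrier $C_\tau$ is the union of the disjoint complements $N^{\mathrm d}$ where $N=\bigcap_nV_n$ ranges over intersections of normal sequences of solid $\tau$-neighbourhoods of zero. An order basis of a vector lattice $G$ is a non-empty $A\subseteq G$ with $A^{\mathrm d}=\{0\}$. $E$ has the countable sup property if every subset with a supremum contains an at most countable subset with the same supremum. Embedded sequence: given a net $(x_\alpha)_{\alpha\in A}$, a sequence $(x_{\alpha_n})_{n\geq1}$ with $\alpha_1\leq\alpha_2\leq\dotsb$, strictly increasing when $A$ has no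 largest element. *)

From HB Require Import structures.
From mathcomp Require Import all_boot all_order all_algebra.
From mathcomp Require Import all_classical all_reals all_analysis.
Set Implicit Arguments. Unset Strict Implicit. Unset Printing Implicit Defensive.
Import Order.TTheory GRing.Theory Num.Theory.
Local Open Scope classical_set_scope.
Local Open Scope ring_scope.

Section VL.
Variables (R : realType) (E : topologicalLmodType R).
Variables (le : E -> E -> Prop) (join : E -> E -> E).

Record vector_lattice : Prop := {
  vl_refl : forall x, le x x;
  vl_trans : forall x y z, le x y -> le y z -> le x z;
  vl_antisym : forall x y, le x y -> le y x -> x = y;
  vl_add : forall x y z, le x y -> le (x + z) (y + z);
  vl_scale : forall (a : R) x y, 0 <= a -> le x y -> le (a *: x) (a *: y);
  vl_join_ubl : forall x y, le x (join x y);
  vl_join_ubr : forall x y, le y (join x y);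
  vl_join_lub : forall x y z, le x z -> le y z -> le (join x y) z;
  vl_archimedean : forall x y, le 0 x -> (forall n : nat, le (n%:R *: x) y) -> x = 0
}.

Definition meet (x y : E) : E := - join (- x) (- y).
Definition absv (x : E) : E := join x (- x).

Definition is_sup (S : set E) (s : E) : Prop :=
  (forall y, S y -> le y s) /\ (forall u, (forall y, S y -> le y u) -> le s u).
Definition is_inf (S : set E) (s : E) : Prop :=
  (forall y, S y -> le s y) /\ (forall u, (forall y, S y -> le u y) -> le u s).

Definition directed (A : Type) (ra : A -> A -> Prop) : Prop :=
  (exists a : A, True) /\ (forall a, ra a a) /\
  (forall a b c, ra a b -> ra b c -> ra a c) /\
  (forall a b, exists c, ra a c /\ ra b c).

Definition natle (m n : nat) : Prop := (m <= n)%N.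

Definition tconv (A : Type) (ra : A -> A -> Prop) (x : A -> E) (x0 : E) : Prop :=
  forall U, nbhs x0 U -> exists a0, forall a, ra a0 a -> U (x a).

Definition oconv (A : Type) (ra : A -> A -> Prop) (x : A -> E) (x0 : E) : Prop :=
  exists (B : Type) (rb : B -> B -> Prop) (y : B -> E),
    directed rb /\ (forall b1 b2, rb b1 b2 -> le (y b2) (y b1)) /\
    is_inf (range y) 0 /\
    forall b0, exists a0, forall a, ra a0 a -> le (absv (x a - x0)) (y b0).

Definition uoconv (A : Type) (ra : A -> A -> Prop) (x : A -> E) (x0 : E) : Prop :=
  forall w : E, oconv ra (fun a => meet (absv (x a - x0)) (absv w)) 0.

Definition solid (V : set E) : Prop :=
  forall x y, V y -> le (absv x) (absv y) -> V x.

Definition locally_solid : Prop :=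
  forall U, nbhs (0 : E) U -> exists V, nbhs (0 : E) V /\ solid V /\ V `<=` U.

Definition uo_Lebesgue : Prop :=
  locally_solid /\
  forall (A : Type) (ra : A -> A -> Prop) (x : A -> E) (x0 : E),
    directed ra -> uoconv ra x x0 -> tconv ra x x0.

Definition normal_seq (V : nat -> set E) : Prop :=
  forall n u v, V n.+1 u -> V n.+1 v -> V n (u + v).

Definition disj_compl (N : set E) : set E :=
  [set x | forall y, N y -> meet (absv x) (absv y) = 0].

Definition carrier : set E :=
  [set x | exists V : nat -> set E,
     (forall n, nbhs (0 : E) (V n) /\ solid (V n)) /\ normal_seq V /\
     disj_compl (\bigcap_n V n) x].

Definition countable_sup_property : Prop :=
  forall (S : set E) (s : E), is_sup S s ->
    exists T, T `<=` S /\ countable T /\ is_sup T s.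

Definition embedded (A : Type) (ra : A -> A -> Prop) (s : nat -> A) : Prop :=
  (forall n, ra (s n) (s n.+1)) /\
  ((~ exists a, forall b, ra b a) -> forall n, ~ ra (s n.+1) (s n)).

End VL.

Definition strict_incr (phi : nat -> nat) : Prop := forall n, (phi n < phi n.+1)%N.

(* Every element of the carrier is disjoint from the intersection of some
   normal sequence of solid neighbourhoods of zero.  Given a net x converging
   to x0, pick indices a_1 <= a_2 <= ... such that x(a_n) - x0 lies in the
   n-th term of the diagonal intersection W of the normal sequences attached
   to x(a_1) - x0, ..., x(a_(n-1)) - x0.  Then x(a_n) - x0 lies in W_n and is
   disjoint from the intersection N of W.  For any w, the limit superior v of
   |x(a_n) - x0| /\ |w| is disjoint from N by the Archimedean property, and
   lies in N because the finite tail suprema lie in W_m while, by the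
   uo-Lebesgue property, their gaps to v tend to zero in the topology.  Hence
   v = 0, i.e. the embedded sequence uo-converges to x0.
   The countable sup property makes the carrier all of E: below every
   positive non-zero element lies a non-zero element of the carrier, and
   countably many carrier elements are handled by one diagonal normal
   sequence.  Part (2) follows from (1) applied to subsequences. *)

From Pilot Require Import Defs.
From HB Require Import structures.
From mathcomp Require Import all_boot all_order all_algebra.
From mathcomp Require Import all_classical all_reals all_analysis.
Import Order.TTheory GRing.Theory Num.Theory.
Local Open Scope classical_set_scope.
Local Open Scope ring_scope.
Set Implicit Arguments. Unset Strict Implicit. Unset Printing Implicit Defensive.

(** * Nets, subsequences and embedded sequences *)

Lemma directed_natle : directed natle.
Proof.
split; first by exists 0%N.
split; first exact: leqnn.
split; first by move=> a b c; apply: leq_trans.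
by move=> a b; exists (maxn a b); split; [apply: leq_maxl|apply: leq_maxr].
Qed.

Lemma embedded_natle s : embedded natle s -> strict_incr s.
Proof.
move=> [_ s_strict] n; rewrite ltnNge; apply/negP; apply: s_strict.
by move=> [m /(_ m.+1)]; rewrite /natle ltnn.
Qed.

Section TopologicalConvergence.
Variables (R : realType) (E : topologicalLmodType R).

Lemma tconv_nbhs0 A (ra : A -> A -> Prop) (x : A -> E) x0 U :
  tconv ra x x0 -> nbhs 0 U -> exists a0, forall a, ra a0 a -> U (x a - x0).
Proof.
move=> xx0 U0; apply: (xx0 [set e | U (e - x0)]).
have := nbhsT_subproof (@add_continuous E) x0 U0.
by apply: filterS => _ [u Uu <-] /=; rewrite addrAC subrr add0r.
Qed.

Lemma nbhs0_half (U : set E) : nbhs 0 U ->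
  exists2 H, nbhs 0 H & forall a b, H a -> H b -> U (a + b).
Proof.
move=> U0; have /= := @add_continuous E (0, 0) U; rewrite addr0 => /(_ U0)[B [B1 B2] BU].
by exists (B.1 `&` B.2) => [|a b [a1 _] [_ b2]]; [apply: filterI|apply: (BU (a, b))].
Qed.

Lemma embedded_step A (ra : A -> A -> Prop) (x : A -> E) x0 U a :
  directed ra -> tconv ra x x0 -> nbhs 0 U ->
  exists b, [/\ ra a b, (~ exists c, forall d, ra d c) -> ~ ra b a
                      & forall c, ra b c -> U (x c - x0)].
Proof.
move=> [_ [_ [ra_trans ra_ub]]] xx0 U0.
have [a1 a1U] := tconv_nbhs0 xx0 U0.
have [c [ac a1c]] := ra_ub a a1.
have [amax|nomax] := pselect (exists c, forall d, ra d c).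
  exists c; split=> [//|/(_ amax)[]|d cd].
  by apply: a1U; apply: ra_trans a1c cd.
have /existsNP[b nba] : ~ forall b, ra b a by move=> amax; apply: nomax; exists a.
have [d [cd bd]] := ra_ub c b.
exists d; split; first exact: ra_trans ac cd.
  by move=> _ da; apply: nba; apply: ra_trans bd da.
by move=> e de; apply: a1U; apply: ra_trans a1c (ra_trans _ _ _ cd de).
Qed.

Lemma tconv_subseq (x : nat -> E) x0 phi : strict_incr phi ->
  tconv natle x x0 -> tconv natle (fun n => x (phi n)) x0.
Proof.
move=> phi_incr xx0 U U0; have [n0 n0U] := xx0 U U0.
exists n0 => n n0n; apply: n0U; apply: leq_trans n0n _.
by elim: n => // n IH; apply: leq_ltn_trans IH (phi_incr n).
Qed.

Lemma tconv_subsubseq (x : nat -> E) x0 :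
  (forall phi, strict_incr phi -> exists psi,
     strict_incr psi /\ tconv natle (fun n => x (phi (psi n))) x0) ->
  tconv natle x x0.
Proof.
move=> sub; apply: contrapT => /existsNP[U /not_implyP[U0 /forallNP nU]].
have far n : {m | (n <= m)%N /\ ~ U (x m)}.
  by apply: cid; have /existsNP[m /not_implyP[nm nUm]] := nU n; exists m.
pose fix phi n := if n is n'.+1 then sval (far (phi n').+1) else sval (far 0%N).
have phi_incr : strict_incr phi by move=> n; apply: (svalP (far _)).1.
have phiU n : ~ U (x (phi n)) by case: n => [|n]; apply: (svalP (far _)).2.
have [psi [_ /(_ U U0)[n0 n0U]]] := sub phi phi_incr.
exact: phiU (psi n0) (n0U n0 (leqnn n0)).
Qed.

End TopologicalConvergence.

Section VectorLattice.
Variables (R : realType) (E : topologicalLmodType R).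
Variables (le : E -> E -> Prop) (join : E -> E -> E).
Hypothesis VL : vector_lattice le join.
Local Notation "x ≼ y" := (le x y) (at level 70).
Local Notation meet := (meet join).
Local Notation absv := (absv join).

(** * Vector lattice arithmetic *)

Lemma vle_refl x : x ≼ x. Proof. exact: vl_refl VL x. Qed.
Lemma vle_trans y x z : x ≼ y -> y ≼ z -> x ≼ z. Proof. exact: vl_trans VL x y z. Qed.
Lemma vle_anti x y : x ≼ y -> y ≼ x -> x = y. Proof. exact: vl_antisym VL x y. Qed.

Lemma vlerD2r z x y : x ≼ y -> x + z ≼ y + z. Proof. exact: vl_add VL x y z. Qed.
Lemma vlerD2l z x y : x ≼ y -> z + x ≼ z + y.
Proof. by rewrite ![z + _]addrC; apply: vlerD2r. Qed.
Lemma vlerD x y z t : x ≼ y -> z ≼ t -> x + z ≼ y + t.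
Proof. by move=> /(vlerD2r z) xy /(vlerD2l y); apply: vle_trans xy. Qed.

Lemma vlerBlDr x y z : x - y ≼ z <-> x ≼ z + y.
Proof.
by split=> [/(vlerD2r y)|/(vlerD2r (- y))]; rewrite ?subrK ?addrK.
Qed.
Lemma vlerBrDr x y z : x ≼ y - z <-> x + z ≼ y.
Proof.
by split=> [/(vlerD2r z)|/(vlerD2r (- z))]; rewrite ?subrK ?addrK.
Qed.
Lemma vsubr_ge0 x y : 0 ≼ y - x <-> x ≼ y.
Proof. by rewrite vlerBrDr add0r. Qed.
Lemma vlerN2 x y : x ≼ y -> - y ≼ - x.
Proof.
by move=> /(vlerD2r (- x - y)); rewrite !addrA subrr add0r addrAC subrr add0r.
Qed.
Lemma vler_addr x y : 0 ≼ y -> x ≼ x + y.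
Proof. by move=> /(vlerD2l x); rewrite addr0. Qed.
Lemma vler_addl x y : 0 ≼ y -> x ≼ y + x.
Proof. by rewrite addrC; apply: vler_addr. Qed.
Lemma vaddr_ge0 x y : 0 ≼ x -> 0 ≼ y -> 0 ≼ x + y.
Proof. by move=> x0 /(vlerD x0); rewrite addr0. Qed.
Lemma vler_subl x y : 0 ≼ y -> x - y ≼ x.
Proof. by move=> y0; apply/vlerBlDr/vler_addr. Qed.

Lemma vscalen_ge0 (n : nat) x : 0 ≼ x -> 0 ≼ n%:R *: x.
Proof. by move=> /(vl_scale VL (ler0n R n)); rewrite scaler0. Qed.
Lemma vscalenS (n : nat) (x : E) : n.+1%:R *: x = n%:R *: x + x.
Proof. by rewrite !scaler_nat mulrSr. Qed.

Lemma archimedean_ind q y : 0 ≼ q -> 0 ≼ y ->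
  (forall k : nat, k%:R *: q ≼ y -> k.+1%:R *: q ≼ y) -> q = 0.
Proof.
move=> q0 y0 qS; apply: (vl_archimedean VL q0 (y := y)).
by elim=> [|k /qS //]; rewrite scale0r.
Qed.

Lemma vleUl x y : x ≼ join x y. Proof. exact: vl_join_ubl VL x y. Qed.
Lemma vleUr x y : y ≼ join x y. Proof. exact: vl_join_ubr VL x y. Qed.
Lemma vleUx x y z : x ≼ z -> y ≼ z -> join x y ≼ z.
Proof. exact: vl_join_lub VL x y z. Qed.
Lemma vleU2 x y z t : x ≼ z -> y ≼ t -> join x y ≼ join z t.
Proof.
move=> xz yt; apply: vleUx; first exact: vle_trans xz (vleUl _ _).
exact: vle_trans yt (vleUr _ _).
Qed.
Lemma vjoinC x y : join x y = join y x.
Proof. by apply: vle_anti; apply: vleUx; apply: vleUr || apply: vleUl. Qed.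
Lemma vjoinDr z x y : join (x + z) (y + z) = join x y + z.
Proof.
apply: vle_anti; first by apply: vleUx; apply: vlerD2r; [apply: vleUl|apply: vleUr].
by apply/vlerBrDr; apply: vleUx; apply/vlerBrDr; [apply: vleUl|apply: vleUr].
Qed.
Lemma vjoin_ge0 x y : 0 ≼ y -> 0 ≼ join x y.
Proof. by move=> /vle_trans; apply; apply: vleUr. Qed.

Lemma vleIl x y : meet x y ≼ x.
Proof. by rewrite -[x in _ ≼ x]opprK; apply/vlerN2/vleUl. Qed.
Lemma vleIr x y : meet x y ≼ y.
Proof. by rewrite -[y in _ ≼ y]opprK; apply/vlerN2/vleUr. Qed.
Lemma vlexI x y z : z ≼ x -> z ≼ y -> z ≼ meet x y.
Proof. by move=> /vlerN2 zx /vlerN2 zy; rewrite -[z]opprK; apply/vlerN2/vleUx. Qed.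
Lemma vleI2 x y z t : x ≼ z -> y ≼ t -> meet x y ≼ meet z t.
Proof.
move=> xz yt; apply: vlexI; first exact: vle_trans (vleIl _ _) xz.
exact: vle_trans (vleIr _ _) yt.
Qed.
Lemma vmeetC x y : meet x y = meet y x.
Proof. by rewrite /Defs.meet vjoinC. Qed.
Lemma vmeetDr z x y : meet (x + z) (y + z) = meet x y + z.
Proof. by rewrite /Defs.meet !opprD vjoinDr opprD opprK. Qed.
Lemma vmeetxx x : meet x x = x.
Proof. by apply: vle_anti; [apply: vleIl|apply: vlexI; apply: vle_refl]. Qed.
Lemma vmeet_ge0 x y : 0 ≼ x -> 0 ≼ y -> 0 ≼ meet x y.
Proof. exact: vlexI. Qed.

Lemma vjoin_meet x y : x + y = join x y + meet x y.
Proof.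
have -> : meet x y = x + y - join y x.
  rewrite /Defs.meet -opprB; congr (- _); rewrite -vjoinDr opprD.
  by congr join; [rewrite addrCA subrr addr0|rewrite addrA subrr add0r].
by rewrite vjoinC [join y x + _]addrC subrK.
Qed.

Lemma vle_abs x : x ≼ absv x. Proof. exact: vleUl. Qed.
Lemma vleN_abs x : - x ≼ absv x. Proof. exact: vleUr. Qed.
Lemma vabs_ge0 x : 0 ≼ absv x.
Proof.
have xx : 0 ≼ absv x + absv x.
  by rewrite -(subrr x); apply: vlerD; [apply: vle_abs|apply: vleN_abs].
have half_ge0 : (0 : R) <= 2^-1 by rewrite invr_ge0 ler0n.
have := vl_scale VL half_ge0 xx; rewrite scaler0 -mulr2n -[absv x *+ 2]scaler_nat.
by rewrite scalerA mulVf ?scale1r // pnatr_eq0.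
Qed.
Lemma vger0_abs x : 0 ≼ x -> absv x = x.
Proof.
move=> x0; apply: vle_anti; last exact: vle_abs.
by apply: vleUx; [apply: vle_refl|apply: vle_trans (vlerN2 x0) _; rewrite oppr0].
Qed.
Lemma vabs_id x : absv (absv x) = absv x.
Proof. exact/vger0_abs/vabs_ge0. Qed.
Lemma vabsN x : absv (- x) = absv x.
Proof. by rewrite /Defs.absv opprK vjoinC. Qed.

Lemma vmeetDl_le x y z : 0 ≼ x -> 0 ≼ y -> 0 ≼ z ->
  meet (x + y) z ≼ meet x z + meet y z.
Proof.
move=> x0 y0 z0; rewrite -vmeetDr; apply: vlexI.
  rewrite [x + meet _ _]addrC; apply/vlerBlDr; apply: vlexI.
    by apply/vlerBlDr; rewrite addrC; apply: vleIl.
  exact: vle_trans (vler_subl _ x0) (vleIr _ _).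
exact: vle_trans (vleIr _ _) (vler_addr _ (vmeet_ge0 y0 z0)).
Qed.

Lemma vmeet_eq0_le x y x' y' : 0 ≼ x' -> 0 ≼ y' -> x' ≼ x -> y' ≼ y -> meet x y = 0 ->
  meet x' y' = 0.
Proof.
move=> x'0 y'0 x'x y'y xy0; apply: vle_anti; last exact: vmeet_ge0.
by rewrite -xy0; apply: vleI2.
Qed.

Lemma vmeetDl_eq0 x y z : 0 ≼ x -> 0 ≼ y -> 0 ≼ z -> meet x z = 0 -> meet y z = 0 ->
  meet (x + y) z = 0.
Proof.
move=> x0 y0 z0 xz yz; apply: vle_anti; last exact/vmeet_ge0/z0/vaddr_ge0.
by have := vmeetDl_le x0 y0 z0; rewrite xz yz addr0.
Qed.
Lemma vmeetMnl_eq0 (n : nat) x z : 0 ≼ x -> 0 ≼ z -> meet x z = 0 ->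
  meet (n%:R *: x) z = 0.
Proof.
move=> x0 z0 xz; elim: n => [|n IH].
  by rewrite scale0r; apply: vle_anti; [apply: vleIl|apply: vmeet_ge0 => //; apply: vle_refl].
by rewrite vscalenS; apply: vmeetDl_eq0 => //; apply: vscalen_ge0.
Qed.

Lemma vmeet_eq0_addr_le x y z : meet x y = 0 -> x ≼ z -> y ≼ z -> x + y ≼ z.
Proof. by move=> xy0 xz yz; rewrite vjoin_meet xy0 addr0; apply: vleUx. Qed.

Local Notation solid := (solid le join).
Local Notation disj_compl := (disj_compl join).
Local Notation carrier := (carrier le join).

(** * Solid normal sequences *)

Lemma solidN V x : solid V -> V x -> V (- x).
Proof. by move=> Vs Vx; apply: Vs Vx _; rewrite vabsN; apply: vle_refl. Qed.
Lemma solid_le_abs V x y : solid V -> V y -> 0 ≼ x -> x ≼ absv y -> V x.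
Proof. by move=> Vs Vy x0 xy; apply: Vs Vy _; rewrite vger0_abs. Qed.

Definition solid_normal_seq (V : nat -> set E) :=
  (forall n, nbhs (0 : E) (V n) /\ solid (V n)) /\ normal_seq V.

Lemma carrierP x :
  carrier x <-> exists2 V, solid_normal_seq V & disj_compl (\bigcap_n V n) x.
Proof. by split=> [[V [V0 [Vn Vd]]]|[V [V0 Vn] Vd]]; exists V. Qed.

Lemma solid_normal_seqT : solid_normal_seq (fun _ => setT).
Proof. by split=> // n; split; first exact: filterT. Qed.

Lemma solid_normal_seqI V W : solid_normal_seq V -> solid_normal_seq W ->
  solid_normal_seq (fun n => V n `&` W n).
Proof.
move=> [V0 Vn] [W0 Wn]; split=> [n|n u v [Vu Wu] [Vv Wv]]; last first.
  by split; [apply: Vn|apply: Wn].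
have [[V0n Vs] [W0n Ws]] := (V0 n, W0 n).
by split=> [|u v [Vv Wv] uv]; [apply: filterI|split; [apply: Vs Vv uv|apply: Ws Wv uv]].
Qed.

Section SolidNormalSeq.
Variable V : nat -> set E.
Hypothesis hV : solid_normal_seq V.

Lemma normal_seq0 n : V n 0.
Proof. exact: nbhs_singleton (hV.1 n).1. Qed.

Lemma normal_seq_subS n : V n.+1 `<=` V n.
Proof. by move=> u Vu; rewrite -[u]addr0; apply: hV.2 => //; apply: normal_seq0. Qed.

Lemma normal_seq_sub n m : (n <= m)%N -> V m `<=` V n.
Proof.
by move=> /subnK <-; elim: (m - n)%N => // k IH u; rewrite addSn => /normal_seq_subS/IH.
Qed.

Local Notation N := (\bigcap_n V n).

Lemma bigcap_normal_seq0 : N 0.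
Proof. by move=> n _; apply: normal_seq0. Qed.

Lemma bigcap_normal_seqD x y : N x -> N y -> N (x + y).
Proof. by move=> Nx Ny n _; apply: hV.2; [apply: Nx|apply: Ny]. Qed.

Lemma bigcap_normal_seq_solid : solid N.
Proof. by move=> x y Ny xy n _; apply: (hV.1 n).2 (Ny n I) xy. Qed.

Lemma bigcap_normal_seqMn k x : N x -> N (k%:R *: x).
Proof.
move=> Nx; elim: k => [|k IH]; first by rewrite scale0r; apply: bigcap_normal_seq0.
by rewrite vscalenS; apply: bigcap_normal_seqD.
Qed.

End SolidNormalSeq.

Lemma locally_solid_normal_seq U : locally_solid le join -> nbhs 0 U ->
  exists2 V, solid_normal_seq V & V 0%N `<=` U.
Proof.
move=> ls U0.
have half (W : set E) : {S | nbhs 0 W ->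
    [/\ nbhs 0 S, solid S & forall a b, S a -> S b -> W (a + b)]}.
  apply: cid; have [W0|] := pselect (nbhs 0 W); last by exists W.
  have [H H0 HW] := nbhs0_half W0; have [S [S0 [Ss SH]]] := ls H H0.
  by exists S => _; split=> // a b Sa Sb; apply: HW; apply: SH.
have [S [S0 [Ss SU]]] := ls U U0.
pose V n := iter n (fun W => sval (half W)) S.
have V0 n : nbhs 0 (V n) /\ solid (V n).
  by elim: n => [|n [Vn0 _]] //=; have [] := svalP (half (V n)) Vn0.
exists V => //; split=> // n a b; have [_ _] := svalP (half (V n)) (V0 n).1; apply.
Qed.

Lemma normal_seq_diag (V G : nat -> nat -> set E) :
  (forall i, solid_normal_seq (V i)) -> (forall j, G 0%N j = setT) ->
  (forall n j, G n.+1 j = G n j `&` V n j) ->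
  solid_normal_seq (fun j => G j j) /\ forall i, \bigcap_j G j j `<=` \bigcap_j V i j.
Proof.
move=> hV G0 GS.
have hG n : solid_normal_seq (G n).
  elim: n => [|n IH]; first by rewrite (funext G0); apply: solid_normal_seqT.
  by rewrite (funext (GS n)); apply: solid_normal_seqI.
have G_sub n n' j : (n <= n')%N -> G n' j `<=` G n j.
  by move=> /subnK <-; elim: (n' - n)%N => // k IH u; rewrite addSn GS => -[/IH].
split.
  split=> [j|j u v Gu Gv]; first exact: (hG j).1 j.
  by apply: G_sub (leqnSn j) _ _; apply: (hG j.+1).2.
move=> i p Np j _; have ij : (i < (maxn i j).+1)%N by rewrite ltnS leq_maxl.
have /(G_sub _ _ _ ij) := Np (maxn i j).+1 I; rewrite GS => -[_].
by move/(normal_seq_sub (hV i) (leq_trans (leq_maxr i j) (leqnSn _))).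
Qed.

(** * Order limits and the uo-Lebesgue property *)

Lemma is_inf0 (S : set E) : (forall s, S s -> 0 ≼ s) ->
  (forall e, 0 ≼ e -> (forall s, S s -> e ≼ s) -> e = 0) -> is_inf le S 0.
Proof.
move=> S0 Sinf; split=> // u uS; rewrite -(Sinf (join u 0)); first exact: vleUl.
  exact: vleUr.
by move=> s Ss; apply: vleUx (uS _ Ss) (S0 _ Ss).
Qed.

Definition eventual_ub (a : nat -> E) (u : E) := exists m, forall n, (m <= n)%N -> a n ≼ u.

Lemma oconv_limsup (a : nat -> E) c : (forall n, 0 ≼ a n) -> eventual_ub a c ->
  (forall v, 0 ≼ v -> (forall u, eventual_ub a u -> v ≼ u) -> v = 0) ->
  oconv le join natle a 0.
Proof.
move=> a0 ac limsup0; pose B := {u | eventual_ub a u}.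
have ubI (b1 b2 : B) : eventual_ub a (meet (sval b1) (sval b2)).
  case: b1 b2 => [u1 [m1 h1]] [u2 [m2 h2]]; exists (maxn m1 m2) => n.
  by rewrite geq_max => /andP[n1 n2]; apply: vlexI; [apply: h1|apply: h2].
exists B, (fun b1 b2 : B => sval b2 ≼ sval b1), sval; split.
  split; first by exists (exist _ c ac).
  split; first by move=> b; apply: vle_refl.
  split; first by move=> b1 b2 b3 b12 b23; apply: vle_trans b23 b12.
  by move=> b1 b2; exists (exist _ _ (ubI b1 b2)); split; [apply: vleIl|apply: vleIr].
split=> //; split.
  apply: is_inf0 => [_ [[u [m um]] _ <-]|v v0 vB].
    exact: vle_trans (a0 m) (um m (leqnn m)).
  by apply: limsup0 => // u ub; apply: vB; exists (exist _ u ub).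
by move=> [u [m um]]; exists m => n mn; rewrite subr0 vger0_abs //; apply: um.
Qed.

Fixpoint tail_join (a : nat -> E) (m k : nat) : E :=
  if k is k'.+1 then join (a m) (tail_join a m.+1 k') else a m.

Lemma tail_join_ge0 a : (forall n, 0 ≼ a n) -> forall k m, 0 ≼ tail_join a m k.
Proof. by move=> a0; elim=> [|k IH] m //=; apply: vjoin_ge0. Qed.

Lemma tail_join_ub a k m n : (m <= n)%N -> (n <= m + k)%N -> a n ≼ tail_join a m k.
Proof.
elim: k m => [|k IH] m /=.
  rewrite addn0 => mn nm; suff -> : n = m by apply: vle_refl.
  by apply/eqP; rewrite eqn_leq nm mn.
rewrite leq_eqVlt => /orP[/eqP <- _|mn nmk]; first exact: vleUl.
by apply: vle_trans (vleUr _ _); apply: IH; rewrite // addSnnS.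
Qed.

Lemma tail_join_le a m k k' : (k <= k')%N -> tail_join a m k ≼ tail_join a m k'.
Proof.
move=> /subnK <-; elim: (k' - k)%N => [|i IH]; first exact: vle_refl.
apply: vle_trans IH _; rewrite addSn; elim: (i + k)%N m => [|l IHl] m /=; first exact: vleUl.
by apply: vleU2 (vle_refl _) (IHl _).
Qed.

Lemma tail_join_mem W a : solid_normal_seq W -> (forall n, 0 ≼ a n) ->
  (forall n, W n (a n)) -> forall k m, W m (tail_join a m.+1 k).
Proof.
move=> hW a0 aW; elim=> [|k IH] m /=; first exact: normal_seq_subS (aW _).
apply: solid_le_abs (hW.1 m).2 (hW.2 _ _ _ (aW m.+1) (IH m.+1)) _ _.
  exact/vjoin_ge0/tail_join_ge0.
rewrite vger0_abs; last exact/vaddr_ge0/tail_join_ge0.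
by apply: vleUx; [apply/vler_addr/tail_join_ge0|apply: vler_addl].
Qed.

Definition tail_gap (a : nat -> E) v m k := join (v - tail_join a m k) 0.

Lemma tail_gap_inf0 (a : nat -> E) c v m : eventual_ub a c ->
  (forall u, eventual_ub a u -> v ≼ u) ->
  forall e, 0 ≼ e -> (forall k, e ≼ tail_gap a v m k) -> e = 0.
Proof.
move=> ac vlim e e0 egap.
have ub_sub t : eventual_ub a t -> eventual_ub a (t - e).
  move=> [mt ht]; exists (maxn mt m) => n; rewrite geq_max => /andP[tn mn].
  have an : a n ≼ tail_join a m (n - m) by apply: tail_join_ub; rewrite ?subnKC.
  apply/vlerBrDr; apply: vle_trans (vlerD2l (a n) (egap (n - m)%N)) _.
  apply: vle_trans (vlerD2l _ (vleU2 (vlerD2l v (vlerN2 an)) (vle_refl 0))) _.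
  rewrite addrC -vjoinDr subrK add0r; apply: vleUx; last exact: ht.
  by apply: vlim; exists mt.
have ubk k : eventual_ub a (c - k%:R *: e).
  by elim: k => [|k]; [rewrite scale0r subr0|rewrite vscalenS opprD addrA; apply: ub_sub].
apply: (vl_archimedean VL e0 (y := c - v)) => k.
by apply/vlerBrDr; rewrite addrC; apply/vlerBrDr; apply: vlim.
Qed.

Lemma limsup_meet_eq0 (a : nat -> E) c v p : (forall n, 0 ≼ a n) -> (forall n, a n ≼ c) ->
  (forall n, meet (a n) (absv p) = 0) -> 0 ≼ v -> (forall u, eventual_ub a u -> v ≼ u) ->
  meet v (absv p) = 0.
Proof.
move=> a0 ac ap v0 vlim; set q := meet v (absv p).
have q0 : 0 ≼ q by apply/vmeet_ge0/vabs_ge0.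
apply: (archimedean_ind q0 (vle_trans (a0 0%N) (ac 0%N))) => k kq.
have akq n : meet (a n) (k%:R *: q) = 0.
  rewrite vmeetC; apply: vmeetMnl_eq0 => //; rewrite vmeetC.
  exact: vmeet_eq0_le (a0 n) q0 (vle_refl _) (vleIr _ _) (ap n).
have ub : eventual_ub a (c - k%:R *: q).
  by exists 0%N => n _; apply/vlerBrDr/vmeet_eq0_addr_le.
by rewrite vscalenS addrC; apply/vlerBrDr; apply: vle_trans (vleIl _ _) (vlim _ ub).
Qed.

Hypothesis uoL : uo_Lebesgue le join.

Lemma tconv_dominated A (ra : A -> A -> Prop) (x y : A -> E) x0 :
  directed ra -> (forall a b, ra a b -> y b ≼ y a) -> is_inf le (range y) 0 ->
  (forall a, absv (x a - x0) ≼ y a) -> tconv ra x x0.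
Proof.
move=> dir ydec yinf xy; apply: uoL.2 => // w.
exists A, ra, y; split=> //; split=> //; split=> //.
move=> a0; exists a0 => a a0a; rewrite subr0 vger0_abs; last exact/vmeet_ge0/vabs_ge0/vabs_ge0.
exact: vle_trans (vleIl _ _) (vle_trans (xy a) (ydec _ _ a0a)).
Qed.

Lemma limsup_mem_bigcap W (a : nat -> E) c v : solid_normal_seq W ->
  (forall n, 0 ≼ a n) -> (forall n, a n ≼ c) -> (forall n, W n (a n)) ->
  0 ≼ v -> (forall u, eventual_ub a u -> v ≼ u) -> (\bigcap_n W n) v.
Proof.
move=> hW a0 ac aW v0 vlim j _; pose m := j.+2.
have ac' : eventual_ub a c by exists 0%N.
have gap_dec k k' : natle k k' -> tail_gap a v m k' ≼ tail_gap a v m k.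
  by move=> kk'; apply: vleU2 (vle_refl 0); apply/vlerD2l/vlerN2/tail_join_le.
(* The gaps decrease to 0 in order, hence topologically by the uo-Lebesgue
   property, and [v] is below a tail join plus a gap, both in [W j.+1]. *)
have gap_to0 : tconv natle (tail_gap a v m) 0.
  apply: tconv_dominated directed_natle gap_dec _ _.
    apply: is_inf0 => [_ [k _ <-]|e e0 egap]; first exact: vleUr.
    by apply: tail_gap_inf0 ac' vlim _ e0 _ => k; apply: egap; exists k.
  by move=> k; rewrite subr0 vger0_abs; [apply: vle_refl|apply: vleUr].
have [k0 gapW] := gap_to0 _ (hW.1 j.+1).1.
have tjW := tail_join_mem hW a0 aW k0 j.+1.
apply: solid_le_abs (hW.1 j).2 (hW.2 _ _ _ tjW (gapW k0 (leqnn k0))) v0 _.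
rewrite vger0_abs; last exact/vaddr_ge0/vleUr/tail_join_ge0.
by rewrite addrC; apply/vlerBlDr; apply: vleUl.
Qed.

Lemma uoconv_normal_seq W (z : nat -> E) z0 : solid_normal_seq W ->
  (forall n, W n (z n - z0)) -> (forall n, disj_compl (\bigcap_j W j) (z n - z0)) ->
  uoconv le join natle z z0.
Proof.
move=> hW Wz zN w; pose a n := meet (absv (z n - z0)) (absv w).
have a0 n : 0 ≼ a n by apply/vmeet_ge0/vabs_ge0/vabs_ge0.
have aw n : a n ≼ absv w by apply: vleIr.
have aW n : W n (a n) by apply: solid_le_abs (hW.1 n).2 (Wz n) (a0 n) (vleIl _ _).
have aN p n : (\bigcap_j W j) p -> meet (a n) (absv p) = 0.
  by move=> Np; apply: vmeet_eq0_le (a0 n) (vabs_ge0 p) (vleIl _ _) (vle_refl _) (zN n p Np).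
apply: (oconv_limsup a0 (ex_intro _ 0%N (fun n _ => aw n))) => v v0 vlim.
have vN := limsup_mem_bigcap hW a0 aw aW v0 vlim.
by have := limsup_meet_eq0 a0 aw (fun n => aN v n vN) v0 vlim; rewrite vger0_abs // vmeetxx.
Qed.

Lemma bigcap_interval_sup V x : solid_normal_seq V -> 0 ≼ x ->
  (forall p, disj_compl (\bigcap_n V n) p -> meet x (absv p) = 0) ->
  forall e, 0 ≼ e ->
  (forall u, (\bigcap_n V n) u -> 0 ≼ u -> u ≼ x -> e ≼ x - u) -> e = 0.
Proof.
move=> hV x0 xNdd e e0 ex.
have ex0 : e ≼ x by rewrite -[x]subr0; apply: ex (bigcap_normal_seq0 hV) (vle_refl _) x0.
have eNd : disj_compl (\bigcap_n V n) e.
  move=> p Np; rewrite vger0_abs //; set q := meet e (absv p).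
  have q0 : 0 ≼ q by apply/vmeet_ge0/vabs_ge0.
  have Nq : (\bigcap_n V n) q.
    by apply: bigcap_normal_seq_solid hV _ _ Np _; rewrite vger0_abs //; apply: vleIr.
  apply: (archimedean_ind q0 x0) => k kq.
  have ekq := ex _ (bigcap_normal_seqMn hV k Nq) (vscalen_ge0 k q0) kq.
  by rewrite vscalenS addrC; apply/vlerBrDr; apply: vle_trans (vleIl _ _) ekq.
have := vmeet_eq0_le e0 (vabs_ge0 e) ex0 (vle_refl _) (xNdd e eNd).
by rewrite vger0_abs // vmeetxx.
Qed.

Lemma disj_compl2_bigcap V r : solid_normal_seq V ->
  disj_compl (disj_compl (\bigcap_n V n)) r -> (\bigcap_n V n) r.
Proof.
move=> hV rNdd; set N := \bigcap_n V n.
suff Nr : N (absv r).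
  by apply: bigcap_normal_seq_solid hV _ _ Nr _; rewrite vabs_id; apply: vle_refl.
set x := absv r; have x0 : 0 ≼ x by apply: vabs_ge0.
pose Ix := {u | N u /\ 0 ≼ u /\ u ≼ x}.
have Ix0 : N 0 /\ 0 ≼ 0 /\ 0 ≼ x.
  by split; [apply: bigcap_normal_seq0|split; [apply: vle_refl|]].
have dirI : directed (fun i1 i2 : Ix => sval i1 ≼ sval i2).
  split; first by exists (exist _ 0 Ix0).
  split; first by move=> i; apply: vle_refl.
  split; first by move=> i1 i2 i3; apply: vle_trans.
  move=> [u1 [N1 [u10 u1x]]] [u2 [N2 [u20 u2x]]].
  have Nj : N (join u1 u2).
    apply: bigcap_normal_seq_solid hV _ _ (bigcap_normal_seqD hV N1 N2) _.
    rewrite (vger0_abs (vjoin_ge0 u1 u20)) (vger0_abs (vaddr_ge0 u10 u20)).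
    by apply: vleUx; [apply: vler_addr|apply: vler_addl].
  have J : N (join u1 u2) /\ 0 ≼ join u1 u2 /\ join u1 u2 ≼ x.
    by split; last split; [|apply: vjoin_ge0|apply: vleUx].
  by exists (exist _ (join u1 u2) J); split; [apply: vleUl|apply: vleUr].
(* [N] meets [[0, x]] in a net increasing to [x], so by the uo-Lebesgue
   property [x - u] is in [V j.+1] for some [u] in [N]. *)
have conv : tconv (fun i1 i2 : Ix => sval i1 ≼ sval i2) sval x.
  apply: (tconv_dominated (y := fun i => x - sval i)) => //.
  - by move=> i1 i2 i12; apply/vlerD2l/vlerN2.
  - apply: is_inf0 => [_ [[u [Nu [u0 ux]]] _ <-]|e e0 ex]; first by apply/vsubr_ge0.
    apply: (bigcap_interval_sup hV x0 (fun p => rNdd p) e0) => u Nu u0 ux.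
    by apply: ex; exists (exist _ u (conj Nu (conj u0 ux))).
  - move=> [u [Nu [u0 ux]]]; rewrite -opprB vabsN vger0_abs; first exact: vle_refl.
    by apply/vsubr_ge0.
move=> j _; have [[u [Nu ux]] uV] := tconv_nbhs0 conv (hV.1 j.+1).1.
have /= /(solidN (hV.1 j.+1).2) := uV _ (vle_refl _); rewrite opprB => xu.
by rewrite -(subrK u x); apply: hV.2 _ _ _ xu (Nu j.+1 I).
Qed.

(** * The carrier *)

Lemma carrier_abs y : carrier (absv y) -> carrier y.
Proof.
by move=> /carrierP[V hV Vd]; apply/carrierP; exists V => // p /Vd; rewrite vabs_id.
Qed.

Lemma carrier_scalen k u : carrier u -> 0 ≼ u -> carrier (k%:R *: u).
Proof.
move=> /carrierP[V hV Vd] u0; apply/carrierP; exists V => // p /Vd.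
rewrite (vger0_abs u0) (vger0_abs (vscalen_ge0 k u0)).
exact: (vmeetMnl_eq0 k u0 (vabs_ge0 p)).
Qed.

Lemma carrier_dense r : hausdorff_space E -> 0 ≼ r -> r <> 0 ->
  exists u, [/\ carrier u, 0 ≼ u, u ≼ r & u <> 0].
Proof.
move=> hs r0 rn0.
have [U U0 Ur] : exists2 U, nbhs (0 : E) U & ~ U r.
  apply: contrapT => nU; apply/rn0/hs => A B Ar B0.
  exists r; split; first exact: nbhs_singleton.
  by apply: contrapT => nBr; apply: nU; exists B.
have [V hV V0U] := locally_solid_normal_seq uoL.1 U0.
apply: contrapT => nu; apply/Ur/V0U; suff: (\bigcap_n V n) r by apply.
apply: (disj_compl2_bigcap hV) => p pNd; rewrite (vger0_abs r0).
apply: contrapT => rp0; apply: nu; exists (meet r (absv p)); split=> //.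
- apply/carrierP; exists V => // y Ny; rewrite vger0_abs; last exact/vmeet_ge0/vabs_ge0.
  exact: vmeet_eq0_le (vmeet_ge0 r0 (vabs_ge0 _)) (vabs_ge0 _) (vleIr _ _)
    (vle_refl _) (pNd y Ny).
- exact/vmeet_ge0/vabs_ge0.
- exact: vleIl.
Qed.

Lemma carrier_is_sup x : hausdorff_space E -> 0 ≼ x ->
  is_sup le [set u | [/\ carrier u, 0 ≼ u & u ≼ x]] x.
Proof.
move=> hs x0; split=> [u [] //|z zub]; set z' := meet z x.
have Sz' u : carrier u -> 0 ≼ u -> u ≼ x -> u ≼ z'.
  by move=> Cu u0 ux; apply: vlexI => //; apply: zub.
have [xz'|xz'0] := pselect (x - z' = 0); first by rewrite (subr0_eq xz'); apply: vleIl.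
have [u [Cu u0 ux un0]] := carrier_dense hs ((vsubr_ge0 _ _).2 (vleIr _ _)) xz'0.
case: un0; apply: (archimedean_ind u0 x0) => k ku.
have := vlerD (Sz' _ (carrier_scalen k Cu u0) (vscalen_ge0 k u0) ku) ux.
by rewrite vscalenS [z' + _]addrC subrK.
Qed.

Lemma carrier_countable_sup (T : set E) x : (forall t, T t -> carrier t /\ 0 ≼ t) ->
  countable T -> is_sup le T x -> 0 ≼ x -> carrier x.
Proof.
move=> TC /countable_injP[f finj] [Tx Tsup] x0.
have Vof i : {V | solid_normal_seq V /\
    forall t, T t -> f t = i -> disj_compl (\bigcap_n V n) t}.
  apply: cid; have [[t [Tt <-]]|nt] := pselect (exists t, T t /\ f t = i).
    have /carrierP[V hV Vd] := (TC t Tt).1; exists V; split=> // t' Tt' ft't.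
    by rewrite (finj t' t (mem_set Tt') (mem_set Tt) ft't).
  exists (fun _ => setT); split=> [|t Tt fti]; first exact: solid_normal_seqT.
  by case: nt; exists t.
pose fix G n := if n is n'.+1 then fun j => G n' j `&` sval (Vof n') j else fun _ => setT.
have [hG GV] := normal_seq_diag (G := G) (fun i => (svalP (Vof i)).1)
  (fun j => erefl) (fun n j => erefl).
apply/carrierP; exists (fun j => G j j) => // p Np; rewrite vger0_abs //.
set m := meet x (absv p); have m0 : 0 ≼ m by apply/vmeet_ge0/vabs_ge0.
have tm t : T t -> t ≼ x - m.
  move=> Tt; have [_ t0] := TC t Tt.
  have := (svalP (Vof (f t))).2 t Tt erefl p (GV _ p Np); rewrite vger0_abs // => tp.
  have tm0 : meet t m = 0 by apply: vmeet_eq0_le t0 m0 (vle_refl _) (vleIr _ _) tp.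
  by apply/vlerBrDr/vmeet_eq0_addr_le/vleIl; [|apply: Tx].
have /vlerBrDr/(vlerD2l (- x)) := Tsup _ tm; rewrite addKr addNr => m_le0.
exact: vle_anti m_le0 m0.
Qed.

Lemma countable_sup_carrier : hausdorff_space E ->
  countable_sup_property le -> carrier = setT.
Proof.
move=> hs csp; apply/seteqP; split=> // y _; apply: carrier_abs.
have [T [TS [Tc Tsup]]] := csp _ _ (carrier_is_sup hs (vabs_ge0 y)).
by apply: carrier_countable_sup Tc Tsup (vabs_ge0 y) => t /TS[].
Qed.

Lemma uoconv_embedded A (ra : A -> A -> Prop) (x : A -> E) x0 :
  carrier = setT -> directed ra -> tconv ra x x0 ->
  exists s : nat -> A, embedded ra s /\ uoconv le join natle (fun n => x (s n)) x0.
Proof.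
move=> Cfull dir xx0.
have Vof (y : E) : {V | solid_normal_seq V /\ disj_compl (\bigcap_n V n) y}.
  apply: cid; have /carrierP[V hV Vd] : carrier y by rewrite Cfull.
  by exists V.
have next (a : A) (U : set E) : {b | nbhs 0 U -> [/\ ra a b,
    (~ exists c, forall d, ra d c) -> ~ ra b a & forall c, ra b c -> U (x c - x0)]}.
  apply: cid; have [U0|nU] := pselect (nbhs 0 U); last by exists a.
  by have [b hb] := embedded_step a dir xx0 U0; exists b.
have [a0 _] := dir.1.
(* [st n] pairs the n-th index with the intersections of the normal sequences
   attached to the first n terms. *)
pose fix st n := if n is n'.+1 then
    let G j := (st n').2 j `&` sval (Vof (x (st n').1 - x0)) j in
    (sval (next (st n').1 (G n'.+1)), G)
  else (a0, fun _ : nat => [set: E]).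
pose s n := (st n).1.
have [hG GV] := normal_seq_diag (V := fun i => sval (Vof (x (s i) - x0)))
  (G := fun n => (st n).2) (fun i => (svalP (Vof _)).1) (fun j => erefl) (fun n j => erefl).
have step n := svalP (next (s n) ((st n.+1).2 n.+1)) (hG.1 n.+1).1.
exists s; split.
  by split=> [n|nomax n]; have [? snS _] := step n => //; apply: snS.
apply: uoconv_normal_seq hG _ _ => [[|n] //|n p /(GV n)]; last exact: (svalP (Vof _)).2.
by have [_ _] := step n; apply; apply: dir.2.1.
Qed.

End VectorLattice.

Unset Implicit Arguments.

Theorem theorem5p8 (R : realType) (E : topologicalLmodType R)
    (le : E -> E -> Prop) (join : E -> E -> E) :
  hausdorff_space E ->
  vector_lattice le join ->
  uo_Lebesgue le join ->
  (carrier le join = setT \/ countable_sup_property le) ->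
  (forall (A : Type) (ra : A -> A -> Prop) (x : A -> E) (x0 : E),
      directed ra -> tconv ra x x0 ->
      exists s : nat -> A, embedded ra s /\
        uoconv le join natle (fun n => x (s n)) x0 /\
        tconv natle (fun n => x (s n)) x0) /\
  (forall (x : nat -> E) (x0 : E),
      tconv natle x x0 <->
      (forall phi, strict_incr phi -> exists psi, strict_incr psi /\
         uoconv le join natle (fun n => x (phi (psi n))) x0)).
Proof.
move=> hs VL uoL hC.
have Cfull : carrier le join = setT by case: hC => // /(countable_sup_carrier VL uoL hs).
have uo_tconv (x : nat -> E) x0 : uoconv le join natle x x0 -> tconv natle x x0.
  exact: uoL.2 _ _ _ _ directed_natle.
split=> [A ra x x0 dir xx0|x x0].
  have [s [s_emb xs]] := uoconv_embedded VL uoL Cfull dir xx0.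
  by exists s; split=> //; split=> //; apply: uo_tconv.
split=> [xx0 phi phi_incr|sub].
  have [s [/embedded_natle s_incr xs]] :=
    uoconv_embedded VL uoL Cfull directed_natle (tconv_subseq phi_incr xx0).
  by exists s.
apply: tconv_subsubseq => phi /sub[psi [psi_incr xs]].
by exists psi; split=> //; apply: uo_tconv.
Qed.
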